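(* Let $\gamma=(\gamma_1,\dots,\gamma_b)$ be a parallel map on $V=V_1\oplus\cdots\oplus V_b$, $V_i\cong(\mathbb F_2)^m$, with $0\gamma=0$. Let $U$ be a subspace of $V$ of dimension $n-1$. Suppose that for every $i\notin J_U$, $\gamma_i$ is differentially $2^r$-uniform with $r<m$ and strongly $(r-1)$-anti-invariant, and for every $j\in J_U$, $\gamma_j$ is differentially $2^r$-uniform with $r<m-1$ and strongly $r$-anti-invariant. If $\gamma$ maps $\mathcal L(W)$ onto a non-trivial partition $\mathcal{LA}_U(W_1|W_2)$, then $W,W_1,W_2$ are walls and $W=W_1=W_2$; in particular $\mathcal{LA}_U(W_1|W_2)$ is linear.
   Context: Let $m,b>1$, $n=mb$, $V=(\mathbb F_2)^n=V_1\oplus\cdots\oplus V_b$, $V_i\cong(\mathbb F_2)^m$. Permutations act on the right. A parallel map is $\gamma\in\mathrm{Sym}(V)$ with $(v_1\oplus\cdots\oplus v_b)\gamma=v_1\gamma_1\oplus\cdots\oplus v_b\gamma_b$, $\gamma_i\in\mathrm{Sym}(V_i)$. A wall is $\bigoplus_{i\in I}V_i$ with $\emptyset\ne I\subsetneq\{1,\dots,b\}$. For a subspace $U$ of dimension $n-1$, $J_U=\{j: V_j\cap U\subsetneq V_j\}$. $f:(\mathbb F_2)^m\to(\mathbb F_2)^m$ is differentially $\delta$-uniform if $\delta=\max_{a\ne0,b}|\{x:f(x+a)+f(x)=b\}|$; for $f(0)=0$, $f$ is strongly $s$-anti-invariant if for all subspaces $U',W'$ of $(\mathbb F_2)^m$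 with $f(U')=W'$, either $\dim U'=\dim W'<m-s$ or $U'=W'=(\mathbb F_2)^m$. A permutation maps a partition $\mathcal A$ onto $\mathcal B$ if it sends the blocks of $\mathcal A$ exactly onto the blocks of $\mathcal B$; trivial partitions are the singleton partition and $\{V\}$. $\mathcal L(W)=\{W+v:v\in V\}$. For subspaces $W_1,W_2\subseteq U$, $\mathcal{LA}_U(W_1|W_2)=\{W_1+v:v\in U\}\cup\{(W_2+\bar v)+v:v\in U\}$ for any $\bar v\in V\setminus U$. *)

From HB Require Import structures.
From mathcomp Require Import all_boot all_order all_algebra.
From mathcomp Require Import fingroup perm.
Set Implicit Arguments. Unset Strict Implicit. Unset Printing Implicit Defensive.
Import GRing.Theory.
Local Open Scope ring_scope.

Definition blk (m : nat) := 'rV['F_2]_m.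
Definition Vsp (m b : nat) := {ffun 'I_b -> 'rV['F_2]_m}.

Definition parmap (m b : nat) (g : 'I_b -> {perm 'rV['F_2]_m})
  (v : {ffun 'I_b -> 'rV['F_2]_m}) : {ffun 'I_b -> 'rV['F_2]_m} :=
  [ffun i => g i (v i)].

Definition block (m b : nat) (j : 'I_b) : {set {ffun 'I_b -> 'rV['F_2]_m}} :=
  [set v : {ffun 'I_b -> 'rV['F_2]_m} | [forall k, (k != j) ==> (v k == 0)]].

Definition JU (m b : nat) (U : {vspace {ffun 'I_b -> 'rV['F_2]_m}}) : {set 'I_b} :=
  [set j | (block m j :&: [set x | x \in U]) \proper block m j].

Definition is_wall (m b : nat) (W : {vspace {ffun 'I_b -> 'rV['F_2]_m}}) : Prop :=
  exists I : {set 'I_b}, [/\ I != set0, I != setT &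
    forall v : {ffun 'I_b -> 'rV['F_2]_m},
      (v \in W) = [forall k, (k \notin I) ==> (v k == 0)]].

Notation VV m b := {ffun 'I_b -> 'rV['F_2]_m}.

Definition coset (m b : nat) (W : {vspace VV m b}) (v : VV m b) : {set VV m b} :=
  [set w + v | w : VV m b in W].

Definition Lpart (m b : nat) (W : {vspace VV m b}) : {set {set VV m b}} :=
  [set coset W v | v in [set: VV m b]].

(* LA_U(W1|W2) = { W1 + v : v in U } \cup { (W2 + vbar) + v : v in U },
   for a (fixed, arbitrary) vbar outside U. *)
Definition LApart (m b : nat) (U W1 W2 : {vspace VV m b}) (vbar : VV m b)
  : {set {set VV m b}} :=
  [set coset W1 v | v in U] :|: [set coset W2 (vbar + v) | v in U].

Definition trivial_part (m b : nat) (P : {set {set VV m b}}) : Prop :=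
  P = [set [set x] | x in [set: VV m b]] \/ P = [set [set: VV m b]].

Definition maps_onto (T : finType) (f : T -> T) (A B : {set {set T}}) : Prop :=
  [set f @: X | X : {set T} in A] = B.

Definition diff_unif (m : nat) (f : 'rV['F_2]_m -> 'rV['F_2]_m) : nat :=
  (\max_(a : 'rV['F_2]_m | a != 0%R) \max_(c : 'rV['F_2]_m)
     #|[set x : 'rV['F_2]_m | (f (x + a) + f x == c)%R]|)%N.

Definition diff_uniform (m : nat) (f : 'rV['F_2]_m -> 'rV['F_2]_m) (delta : nat)
  : Prop := diff_unif f = delta.

Definition strongly_anti_invariant (m : nat) (f : 'rV['F_2]_m -> 'rV['F_2]_m)
  (s : nat) : Prop :=
  forall U' W' : {vspace 'rV['F_2]_m},
    f @: [set x | x \in U'] = [set x | x \in W'] ->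
    ((\dim U' = \dim W') /\ (\dim U' < m - s)%N) \/ (U' = fullv /\ W' = fullv).

(* Since gamma fixes 0, it maps W onto the block W1 of LA_U(W1|W2) through 0,
   and it maps two points of a coset of W either both into U, with difference
   in W1, or both outside U, with difference in W2.  Restricted to a block V_j,
   gamma_j maps the slice Y = W /\ V_j onto W1 /\ V_j; for 0 <> e in Y the
   derivative x |-> gamma_j(x + e) + gamma_j(x) sends the (at least 2^(m-1))
   points x with gamma_j(x) in U to nonzero vectors of W1 /\ V_j, so
   differential 2^r-uniformity forces Y to be too large for anti-invariance
   unless Y = 0 or Y = V_j.  When Y = 0 the same kind of count, now with a
   single derivative value, shows that W projects to 0 on V_j.  Hence W is
   the sum of the blocks it contains; a parallel map permutes the cosets of
   such a sum, so LA_U(W1|W2) = L(W), which forces W1 = W2 = W, and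
   non-triviality of the partition makes W a wall. *)

From HB Require Import structures.
From mathcomp Require Import all_boot all_order all_algebra.
From mathcomp Require Import fingroup perm finfield zify.
Set Implicit Arguments. Unset Strict Implicit. Unset Printing Implicit Defensive.
Import GRing.Theory.
Local Open Scope ring_scope.

Section CharTwo.

Context {V : lmodType 'F_2}.

Lemma addrr_F2 (x : V) : x + x = 0.
Proof.
have -> : x + x = (1 + 1 : 'F_2) *: x by rewrite scalerDl scale1r.
by rewrite [1 + 1 : 'F_2](_ : _ = 0) ?scale0r //; apply/val_inj.
Qed.

Lemma addrK_F2 (x y : V) : x + y + y = x.
Proof. by rewrite -addrA addrr_F2 addr0. Qed.

Lemma oppr_F2 (x : V) : - x = x.
Proof. by apply/eqP; rewrite eq_sym -addr_eq0 addrr_F2. Qed.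

Lemma addr_eq0_F2 (x y : V) : (x + y == 0) = (x == y).
Proof. by rewrite addr_eq0 oppr_F2. Qed.

End CharTwo.

Lemma card_vspace_F2 m (Y : {vspace 'rV['F_2]_m}) :
  #|[set x | x \in Y]| = (2 ^ \dim Y)%N.
Proof. by rewrite cardsE card_vspace card_Fp. Qed.

Lemma hyperplane_addv_line (K : fieldType) (vT : vectType K) (U : {vspace vT}) y :
  \dim U = (\dim {:vT}).-1 -> y \notin U -> (U + <[y]>)%VS = fullv.
Proof.
move=> dimU yU; apply/eqP; rewrite eqEdim subvf /=.
have : U != (U + <[y]>)%VS.
  by apply: contraNneq yU => ->; exact: subvP (addvSr U _) _ (memv_line y).
rewrite -(ltn_leqif (dimv_leqif_eq (addvSl U <[y]>))) dimU.
by apply: leq_trans; rewrite leqSpred.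
Qed.

Lemma dim_lpreim_hyperplane (K : fieldType) (aT rT : vectType K)
    (f : 'Hom(aT, rT)) (U : {vspace rT}) :
  \dim U = (\dim {:rT}).-1 -> (\dim {:aT} <= (\dim (f @^-1: U)).+1)%N.
Proof.
move=> dimU; set P := (f @^-1: U)%VS.
have [/dimvS/leqW // | /subvPn [x0 _ x0P]] := boolP (fullv <= P)%VS.
have fullP : (P + <[x0]>)%VS = fullv.
  apply/vspaceP => x; rewrite memvf; apply/memv_addP.
  have : f x \in (U + <[f x0]>)%VS.
    by rewrite hyperplane_addv_line ?memvf // memv_preim.
  case/memv_addP => u Uu [_ /vlineP [a ->] fxE].
  exists (x - a *: x0); last by exists (a *: x0); rewrite ?memvZ ?memv_line ?subrK.
  by rewrite -memv_preim linearB linearZ /= fxE addrK.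
rewrite -fullP; apply: leq_trans (dimv_add_leqif P <[x0]>) _.
by rewrite dim_vline -addn1 leq_add2l leq_b1.
Qed.

Definition emb m b (j : 'I_b) (x : 'rV['F_2]_m) : VV m b :=
  [ffun k => if k == j then x else 0].

Fact emb_is_linear m b j : linear (@emb m b j).
Proof.
move=> a x y; apply/ffunP => k; rewrite !ffunE.
by case: (k == j); rewrite ?scaler0 ?addr0.
Qed.

HB.instance Definition _ m b j :=
  GRing.isLinear.Build 'F_2 _ _ _ (@emb m b j) (@emb_is_linear m b j).

Lemma ffun_sum_emb m b (v : VV m b) : v = \sum_k emb k (v k).
Proof.
apply/ffunP => i; rewrite sum_ffunE (bigD1 i) //= big1 => [|k ki].
  by rewrite ffunE eqxx addr0.
by rewrite ffunE eq_sym (negbTE ki).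
Qed.

Section ParallelMap.

Variables (m b : nat) (g : 'I_b -> {perm 'rV['F_2]_m}).

Definition parinv (y : VV m b) : VV m b := [ffun i => (g i)^-1%g (y i)].

Lemma parmapK : cancel (parmap g) parinv.
Proof. by move=> x; apply/ffunP => i; rewrite !ffunE permK. Qed.

Lemma parinvK : cancel parinv (parmap g).
Proof. by move=> y; apply/ffunP => i; rewrite !ffunE permKV. Qed.

Lemma parmap_inj : injective (parmap g).
Proof. exact: can_inj parmapK. Qed.

Lemma perm_parmap0 i : parmap g 0 = 0 -> g i 0 = 0.
Proof. by move/ffunP/(_ i); rewrite !ffunE. Qed.

Lemma parmap_emb j x : parmap g 0 = 0 -> parmap g (emb j x) = emb j (g j x).
Proof.
move=> g0; apply/ffunP => k; rewrite !ffunE.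
by case: eqP => [-> | _] //; rewrite perm_parmap0.
Qed.

End ParallelMap.

Lemma mem_coset m b (W : {vspace VV m b}) v y : (y \in coset W v) = (y + v \in W).
Proof.
apply/imsetP/idP => [[w Ww ->] | yvW]; first by rewrite addrK_F2.
by exists (y + v); rewrite ?addrK_F2.
Qed.

Lemma coset_eq_space m b (W W' : {vspace VV m b}) u v :
  coset W' v = coset W u -> W' = W.
Proof.
move=> E; have vuW : v + u \in W by rewrite -mem_coset -E mem_coset addrr_F2 mem0v.
apply/vspaceP => y; rewrite -[y in LHS](addrK_F2 y v) -mem_coset E mem_coset.
by rewrite -addrA rpredDr.
Qed.

Lemma LApart_same_block m b (U W1 W2 : {vspace VV m b}) vbar B y y' :
  (W1 <= U)%VS -> (W2 <= U)%VS -> vbar \notin U ->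
  B \in LApart U W1 W2 vbar -> y \in B -> y' \in B ->
  [/\ y \in U, y' \in U & y + y' \in W1] \/
  [/\ y \notin U, y' \notin U & y + y' \in W2].
Proof.
move=> /subvP W1U /subvP W2U vbarU.
have sumW (W : {vspace VV m b}) z z' v : z + v \in W -> z' + v \in W -> z + z' \in W.
  by move=> zW z'W; rewrite -[z + z']addr0 -(addrr_F2 v) addrACA memvD.
case/setUP => /imsetP [v Uv ->]; rewrite !mem_coset => yB y'B.
  left; rewrite -(rpredDr y Uv) -(rpredDr y' Uv) !W1U //.
  by split=> //; exact: sumW yB y'B.
have notU z : z + (vbar + v) \in W2 -> z \notin U.
  move=> zW2; apply: contra vbarU => Uz.
  by rewrite -(rpredDr vbar Uv) -(rpredDr (vbar + v) Uz) addrC W2U.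
by right; split; [exact: notU | exact: notU | exact: sumW yB y'B].
Qed.

Definition slice m b (W : {vspace VV m b}) (j : 'I_b) : {vspace 'rV['F_2]_m} :=
  (linfun (emb j) @^-1: W)%VS.

Lemma mem_slice m b (W : {vspace VV m b}) j x : (x \in slice W j) = (emb j x \in W).
Proof. by rewrite -memv_preim lfunE. Qed.

Lemma dimv_rV m : \dim {: 'rV['F_2]_m} = m.
Proof. by rewrite dimvf /dim /= mul1n. Qed.

Lemma dim_slice_hyperplane m b (U : {vspace VV m b}) j :
  \dim U = (m * b).-1 -> (m <= (\dim (slice U j)).+1)%N.
Proof.
have dimVV : \dim {: VV m b} = (m * b)%N.
  by rewrite dimvf /dim /= card_ord mulnC; congr muln; exact: mul1n.
by move=> dimU; rewrite -{1}(dimv_rV m); apply: dim_lpreim_hyperplane; rewrite dimVV.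
Qed.

Lemma slice_notJU m b (U : {vspace VV m b}) j : j \notin JU U -> slice U j = fullv.
Proof.
rewrite inE properE subsetIl /= negbK => /subsetP blockU.
apply/vspaceP => x; rewrite memvf mem_slice.
have /blockU : emb j x \in block m j.
  by rewrite inE; apply/forallP => k; rewrite ffunE; apply/implyP => /negbTE->.
by rewrite !inE => /andP [].
Qed.

Lemma diff_unif_ge m (f : 'rV['F_2]_m -> 'rV['F_2]_m) a c : a != 0 ->
  (#|[set x | (f (x + a) + f x == c)%R]| <= diff_unif f)%N.
Proof.
move=> a0; rewrite /diff_unif (bigD1 a) //=; apply: leq_trans (leq_maxl _ _).
by rewrite (bigD1 c) //=; apply: leq_maxl.
Qed.

Lemma card_le_diff_unif m (f : 'rV['F_2]_m -> 'rV['F_2]_m) e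
    (X C : {set 'rV['F_2]_m}) :
  e != 0 -> {in X, forall x, f (x + e) + f x \in C} ->
  (#|X| <= #|C| * diff_unif f)%N.
Proof.
move=> e0 XC; rewrite -sum1_card (partition_big (fun x => f (x + e) + f x) (mem C)) //=.
rewrite -sum_nat_const; apply: leq_sum => c _; rewrite sum1dep_card.
apply: leq_trans (diff_unif_ge f c e0); apply: subset_leq_card.
by apply/subsetP => x; rewrite !inE => /andP [].
Qed.

Lemma expn2_pred_mul_lt k r d : (k + r <= d)%N -> ((2 ^ k - 1) * 2 ^ r < 2 ^ d)%N.
Proof.
move=> krd; apply: (@leq_trans (2 ^ (k + r))); last by rewrite leq_exp2l.
by rewrite expnD ltn_pmul2r ?expn_gt0 // subn1 ltn_predL expn_gt0.
Qed.

Section ParallelMapOntoLA.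

Variables (m b : nat) (g : 'I_b -> {perm 'rV['F_2]_m}).
Variables (U W W1 W2 : {vspace VV m b}) (vbar : VV m b).
Hypotheses (g0 : parmap g 0 = 0) (W1U : (W1 <= U)%VS) (W2U : (W2 <= U)%VS).
Hypotheses (vbarU : vbar \notin U)
  (gLW : maps_onto (parmap g) (Lpart W) (LApart U W1 W2 vbar)).

Lemma parmap_same_coset x x' : x + x' \in W ->
  [/\ parmap g x \in U, parmap g x' \in U & parmap g x + parmap g x' \in W1] \/
  [/\ parmap g x \notin U, parmap g x' \notin U & parmap g x + parmap g x' \in W2].
Proof.
move=> xx'W; apply: (LApart_same_block W1U W2U vbarU (B := parmap g @: coset W x)).
- by rewrite -gLW; apply: imset_f; apply/imsetP; exists x.
- by apply: imset_f; rewrite mem_coset addrr_F2 mem0v.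
- by apply: imset_f; rewrite mem_coset addrC.
Qed.

Lemma parmap_mem_W1 z : (parmap g z \in W1) = (z \in W).
Proof.
have : coset W1 0 \in LApart U W1 W2 vbar by rewrite /LApart inE imset_f ?mem0v.
rewrite -gLW => /imsetP [_ /imsetP [v _ ->] W1E].
have memW1 y : (parmap g y \in W1) = (y + v \in W).
  rewrite -[parmap g y]addr0 -mem_coset W1E mem_imset ?mem_coset //.
  exact: parmap_inj.
have vW : v \in W by rewrite -[v]add0r -memW1 g0 mem0v.
by rewrite memW1 rpredDr.
Qed.

Lemma slice_image j : g j @: [set x | x \in slice W j] = [set y | y \in slice W1 j].
Proof.
apply/setP => y; rewrite -[y](permKV (g j)) mem_imset; last exact: perm_inj.
by rewrite !inE !mem_slice -parmap_emb // parmap_mem_W1.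
Qed.

Lemma slice_derivative j e x : e \in slice W j -> emb j (g j x) \in U ->
  g j (x + e) + g j x \in slice W1 j.
Proof.
rewrite !mem_slice => eW Ux.
have : emb j (x + e) + emb j x \in W by rewrite -linearD /= addrAC addrr_F2 add0r.
case/parmap_same_coset => [[_ _] | [_]]; rewrite !parmap_emb //; last by rewrite Ux.
by rewrite -linearD.
Qed.

(* The bound [m + r <= \dim (slice U j) + s.+1] yields
   (2^k - 1) * 2^r < 2^(\dim (slice U j)) for every k < m - s, which rules out
   the proper slices of dimension k allowed by anti-invariance. *)
Lemma slice_trivial_or_full j r s :
  diff_unif (g j) = (2 ^ r)%N -> strongly_anti_invariant (g j) s ->
  (m + r <= \dim (slice U j) + s.+1)%N -> slice W j = 0%VS \/ slice W j = fullv.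
Proof.
move=> dug anti mrs; have [|Wj0] := eqVneq (slice W j) 0%VS; first by left.
right; set e := vpick (slice W j).
have eW : e \in slice W j := memv_pick _.
have e0 : e != 0 by rewrite vpick0.
case: (anti _ _ (slice_image j)) => [[dimW1 ltWs] | [] //]; exfalso.
set X := g j @^-1: [set x | x \in slice U j].
set C := [set y | y \in slice W1 j] :\ 0.
have XC : {in X, forall x, g j (x + e) + g j x \in C}.
  move=> x; rewrite !inE mem_slice => Ux; rewrite slice_derivative // andbT.
  rewrite addr_eq0_F2; apply: contra e0 => /eqP/perm_inj xe.
  by rewrite -(addKr x e) xe addNr.
have cardX : #|X| = (2 ^ \dim (slice U j))%N.
  by rewrite card_preimset ?card_vspace_F2 //; exact: perm_inj.
have cardC : #|C| = (2 ^ \dim (slice W j) - 1)%N.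
  by rewrite dimW1 -card_vspace_F2 (cardsD1 0 [set y | y \in _]) inE mem0v add1n subn1.
have := card_le_diff_unif e0 XC; rewrite cardX cardC dug leqNgt.
by rewrite expn2_pred_mul_lt //; lia.
Qed.

Lemma slice0_coord0 j : slice W j = 0%VS ->
  (diff_unif (g j) < 2 ^ \dim (slice U j))%N -> forall w, w \in W -> w j = 0.
Proof.
move=> Wj0 dug w wW; apply/eqP/negPn/negP => wj0.
set X := g j @^-1: [set x | x \in slice U j].
suff XC : {in X, forall c, g j (c + w j) + g j c \in [set g j (w j)]}.
  have := card_le_diff_unif wj0 XC.
  rewrite cards1 mul1n card_preimset; last exact: perm_inj.
  by rewrite card_vspace_F2 leqNgt dug.
move=> c; rewrite !inE mem_slice => Uc.
have : (w + emb j c) + emb j c \in W by rewrite addrK_F2.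
case/parmap_same_coset => [[_ _] | [_]]; rewrite parmap_emb //; last by rewrite Uc.
move=> sumW1.
rewrite -addr_eq0_F2; set z := g j (c + w j) + g j c + g j (w j).
have : emb j z \in W1.
  have -> : emb j z = parmap g (w + emb j c) + emb j (g j c) + parmap g w.
    apply/ffunP => k; rewrite !ffunE.
    by case: eqP => [-> | _]; rewrite ?addr0 ?addrr_F2 // /z [c + _]addrC.
  by rewrite memvD // parmap_mem_W1.
rewrite -[z](permKV (g j)) -parmap_emb // parmap_mem_W1 -mem_slice Wj0 memv0.
by move/eqP/(congr1 (g j)); rewrite permKV perm_parmap0 // => ->; rewrite eqxx.
Qed.

Lemma slice_full_or_coord0 j r s :
  diff_unif (g j) = (2 ^ r)%N -> strongly_anti_invariant (g j) s ->
  (m + r <= \dim (slice U j) + s.+1)%N -> (r < \dim (slice U j))%N ->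
  slice W j = fullv \/ forall w, w \in W -> w j = 0.
Proof.
move=> dug anti mrs rd; case: (slice_trivial_or_full dug anti mrs) => [Wj0 | ->]; last by left.
by right; apply: slice0_coord0 Wj0 _; rewrite dug ltn_exp2l.
Qed.

End ParallelMapOntoLA.

Lemma LApart_eq_Lpart m b (U W1 W2 W : {vspace VV m b}) vbar :
  LApart U W1 W2 vbar = Lpart W -> W1 = W /\ W2 = W.
Proof.
move=> LAW; have inLA (W' : {vspace VV m b}) v :
    coset W' v \in LApart U W1 W2 vbar -> W' = W.
  by rewrite LAW => /imsetP [u _ /coset_eq_space].
split; first by apply: (inLA _ 0); apply/setUP; left; apply/imsetP; exists 0; rewrite ?mem0v.
by apply: (inLA _ (vbar + 0)); apply/setUP; right; apply/imsetP; exists 0; rewrite ?mem0v.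
Qed.

Lemma Lpart0 m b : Lpart (0%VS : {vspace VV m b}) = [set [set x] | x in [set: VV m b]].
Proof. by apply: eq_imset => v; apply/setP => y; rewrite mem_coset memv0 inE addr_eq0_F2. Qed.

Lemma Lpartf m b : Lpart (fullv : {vspace VV m b}) = [set [set: VV m b]].
Proof.
have cosetT v : coset fullv v = [set: VV m b].
  by apply/setP => y; rewrite mem_coset memvf inE.
by apply/setP => B; rewrite inE; apply/imsetP/eqP => [[v _ ->] | ->]; [|exists 0].
Qed.

Section CoordinateSubspace.

Variables (m b : nat) (W : {vspace VV m b}) (I : {set 'I_b}).

Lemma memv_slices :
  (forall j, j \in I -> slice W j = fullv) ->
  (forall j, j \notin I -> forall w, w \in W -> w j = 0) ->
  forall v, (v \in W) = [forall k, (k \notin I) ==> (v k == 0)].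
Proof.
move=> fullI zeroI v; apply/idP/forallP => [vW k | v0].
  by apply/implyP => kI; rewrite zeroI.
rewrite (ffun_sum_emb v); apply: rpred_sum => k _.
have [kI | kI] := boolP (k \in I); first by rewrite -mem_slice fullI ?memvf.
by move: (v0 k); rewrite kI => /eqP->; rewrite linear0 mem0v.
Qed.

Hypothesis memW : forall v, (v \in W) = [forall k, (k \notin I) ==> (v k == 0)].

Lemma parmap_coset_coord g x : parmap g @: coset W x = coset W (parmap g x).
Proof.
apply/setP => y; rewrite mem_coset memW; apply/imsetP/forallP => [[u] | yx].
  rewrite mem_coset memW => /forallP ux -> k; apply/implyP => kI.
  by move: (ux k); rewrite kI /= !ffunE !addr_eq0_F2 => /eqP->.
exists (parinv g y); last by rewrite parinvK.
rewrite mem_coset memW; apply/forallP => k; apply/implyP => kI.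
by move: (yx k); rewrite kI /= !ffunE !addr_eq0_F2 => /eqP->; rewrite permK.
Qed.

Lemma parmap_Lpart_coord g : maps_onto (parmap g) (Lpart W) (Lpart W).
Proof.
apply/setP => B; apply/imsetP/imsetP => [[_ /imsetP [v _ ->] ->] | [y _ ->]].
  by exists (parmap g v); rewrite ?inE ?parmap_coset_coord.
exists (coset W (parinv g y)); first exact: imset_f.
by rewrite parmap_coset_coord parinvK.
Qed.

Lemma coord_space_nontrivial : ~ trivial_part (Lpart W) -> is_wall W.
Proof.
move=> nontriv; exists I; split => //; apply/eqP => I0; apply: nontriv.
  left; rewrite (_ : W = 0%VS) ?Lpart0 //; apply/vspaceP => v; rewrite memW memv0.
  apply/forallP/eqP => [v0 | -> k]; last by rewrite ffunE eqxx implybT.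
  by apply/ffunP => k; apply/eqP; move: (v0 k); rewrite I0 !inE ffunE.
right; rewrite (_ : W = fullv) ?Lpartf //; apply/vspaceP => v.
by rewrite memW memvf; apply/forallP => k; rewrite I0 inE.
Qed.

End CoordinateSubspace.

Theorem corollary3p9 (m b : nat) (hm : (1 < m)%N) (hb : (1 < b)%N)
  (g : 'I_b -> {perm 'rV['F_2]_m}) (r : nat)
  (U W W1 W2 : {vspace VV m b}) (vbar : VV m b) :
  parmap g 0 = 0 ->
  \dim U = (m * b).-1 ->
  (W1 <= U)%VS -> (W2 <= U)%VS -> vbar \notin U ->
  (forall i, i \notin JU U ->
     [/\ diff_uniform (g i) (2 ^ r), (r < m)%N &
         strongly_anti_invariant (g i) r.-1]) ->
  (forall j, j \in JU U ->
     [/\ diff_uniform (g j) (2 ^ r), (r < m.-1)%N &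
         strongly_anti_invariant (g j) r]) ->
  maps_onto (parmap g) (Lpart W) (LApart U W1 W2 vbar) ->
  ~ trivial_part (LApart U W1 W2 vbar) ->
  [/\ is_wall W, is_wall W1, is_wall W2 & W = W1 /\ W1 = W2] /\
  LApart U W1 W2 vbar = Lpart W1.
Proof.
move=> g0 dimU W1U W2U vbarU outJU inJU gLW nontriv.
have full_or_coord0 j : slice W j = fullv \/ forall w, w \in W -> w j = 0.
  have [jJ | jJ] := boolP (j \in JU U).
    have := dim_slice_hyperplane j dimU; case: (inJU j jJ) => dug rm anti mj.
    by apply: (slice_full_or_coord0 g0 W1U W2U vbarU gLW dug anti); lia.
  case: (outJU j jJ) => dug rm anti.
  apply: (slice_full_or_coord0 g0 W1U W2U vbarU gLW dug anti);
    by rewrite slice_notJU // dimv_rV; lia.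
pose I := [set j | slice W j == fullv].
have memW : forall v, (v \in W) = [forall k, (k \notin I) ==> (v k == 0)].
  apply: memv_slices => j; rewrite inE; first by move/eqP.
  by case: (full_or_coord0 j) => [-> | //]; rewrite eqxx.
have LAW : LApart U W1 W2 vbar = Lpart W by rewrite -gLW; exact: parmap_Lpart_coord memW g.
have wallW : is_wall W by apply: coord_space_nontrivial memW _; rewrite -LAW.
have [W1E W2E] := LApart_eq_Lpart LAW.
by rewrite LAW W1E W2E.
Qed.
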